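(* Let $\varrho_0,\varrho\in\mathbb{R}$ with $0<\varrho_0<\varrho$, let $q\in\mathbb{N}$ with $q\ge2$, let $\boldsymbol{a}\subset\mathbb{N}_0\times\mathbb{N}$ be finite and, for $j\in\mathbb{N}$, let $\varnothing\ne\boldsymbol{a}_j\subseteq\boldsymbol{a}$, and suppose $m/n\le\varrho_0$ for all $(m,n)\in\boldsymbol{a}$. Then the relation $\prec$ on $\boldsymbol{a}$ given by $(m,n)\prec(m',n')$ iff either $m-n\varrho>m'-n'\varrho$, or $m-n\varrho=m'-n'\varrho$ and $n<n'$, is a strict linear order on $\boldsymbol{a}$. Let $(m_0,n_0)\in\boldsymbol{a}$ be $\prec$-minimal subject to the set $\{j\in\mathbb{N}\mid(m_0,n_0)\in\boldsymbol{a}_j\}$ being infinite, let $(k_j)_{j\in\mathbb{N}}$ be natural numbers with $|k_j/j-\varrho|\le1/j$ for all $j$, and set $f(j)=n_0k_j-m_0j$ if $j\ge(\varrho-\varrho_0)^{-1}$ and $f(j)=0$ otherwise. Then the Dirichlet series corresponding to the infinite product $\prod_{j\in\mathbb{N}}\bigl(1+\xi_{\boldsymbol{a}_j,q^j}\bigr)^{q^{f(j)}}$ has abscissa of convergence $\varrho$.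
   Context: For a finite set $\boldsymbol{b}\subset\mathbb{N}_0\times\mathbb{N}$ and $Q\in\mathbb{N}_{\ge2}$, $\xi_{\boldsymbol{b},Q}(s)=\sum_{(m,n)\in\boldsymbol{b}}Q^{m-ns}$, a Dirichlet polynomial. The abscissa of convergence of a Dirichlet series $\sum_n c_nn^{-s}$ with non-negative coefficients is the infimum of real $\sigma$ for which it converges at $s=\sigma$. *)

From HB Require Import structures.
From mathcomp Require Import all_boot all_order all_algebra.
From mathcomp Require Import all_classical all_reals all_analysis.
Set Implicit Arguments. Unset Strict Implicit. Unset Printing Implicit Defensive.
Import Order.TTheory GRing.Theory Num.Theory.
Import numFieldNormedType.Exports.
Local Open Scope ring_scope.

(* A (formal) Dirichlet series sum_{N>=1} c N * N^{-s} is represented by its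
   coefficient function c : nat -> R (the value at 0 is irrelevant). *)

Definition dconv {R : realType} (f g : nat -> R) : nat -> R :=
  fun N => \sum_(d <- divisors N) f d * g (N %/ d)%N.

Definition dunit {R : realType} : nat -> R := fun N => (N == 1%N)%:R.

Definition dpow {R : realType} (f : nat -> R) (e : nat) : nat -> R :=
  iter e (dconv f) dunit.

(* Coefficients of xi_{b,Q}(s) = sum_{(m,n) in b} Q^{m - n s}
   = sum_{(m,n) in b} Q^m (Q^n)^{-s};  b is a duplicate-free list of pairs. *)
Definition xi_coef {R : realType} (b : seq (nat * nat)) (Q : nat) : nat -> R :=
  fun N => \sum_(p <- b | (Q ^ p.2)%N == N) ((Q ^ p.1)%N)%:R.

Definition one_plus_xi {R : realType} (b : seq (nat * nat)) (Q : nat) : nat -> R :=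
  fun N => dunit N + xi_coef b Q N.

Definition dpartial {R : realType} (F : nat -> nat -> R) (J : nat) : nat -> R :=
  \big[dconv/dunit]_(1 <= j < J.+1) F j.

(* Formal infinite product prod_{j >= 1} F j : coefficientwise limit of the
   partial products (these are eventually constant in our application). *)
Definition dinfprod {R : realType} (F : nat -> nat -> R) : nat -> R :=
  fun N => limn (fun J => dpartial F J N).

Definition dconverges {R : realType} (c : nat -> R) (sigma : R) : Prop :=
  cvgn (series (fun n : nat => c n.+1 * ((n.+1)%:R `^ (- sigma)))).

Definition abscissa {R : realType} (c : nat -> R) : \bar R :=
  ereal_inf [set (sigma%:E) | sigma in [set sigma : R | dconverges c sigma]].

Definition prec {R : realType} (rho : R) (x y : nat * nat) : Prop :=
  (x.1%:R - x.2%:R * rho > y.1%:R - y.2%:R * rho) \/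
  (x.1%:R - x.2%:R * rho = y.1%:R - y.2%:R * rho /\ (x.2 < y.2)%N).

(* All factors have non-negative coefficients and the j-th factor is trivial
   below q^j, so the infinite product stabilises coefficientwise and its
   truncated Dirichlet sums are bounded by the product of those of the
   factors, hence by exp (sum_j q^(f j) xi_{a_j,q^j}(sigma)).  For
   sigma > rho, the minimality of (m0, n0) bounds the contribution of every
   (m, n) lying in infinitely many a_j by q^(n0 - j (sigma - rho)), a
   geometric series; the other pairs contribute finitely often.  For
   sigma < rho, the coefficient at (q^j)^n0 is at least q^(f j + j m0)
   whenever (m0, n0) is in a_j, and f is chosen so that the corresponding
   terms of the series stay above q^(-n0). *)

From HB Require Import structures.
From mathcomp Require Import all_boot all_order all_algebra.
From mathcomp Require Import all_classical all_reals all_analysis.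
From mathcomp Require Import lra.
Import Order.TTheory GRing.Theory Num.Theory.
Import numFieldNormedType.Exports.
Local Open Scope ring_scope.
Local Open Scope classical_set_scope.
Set Implicit Arguments. Unset Strict Implicit.

Section DirichletConvolution.
Variable R : realType.
Implicit Types (g h : nat -> R) (F : nat -> nat -> R).

Definition dnonneg g := forall n, 0 <= g n.

Definition deq_below (L : nat) g h := forall n, (0 < n < L)%N -> g n = h n.

Lemma dunit_ge0 : dnonneg (@dunit R).
Proof. by move=> n; rewrite /dunit ler0n. Qed.

Lemma dconv_ge0 g h : dnonneg g -> dnonneg h -> dnonneg (dconv g h).
Proof. by move=> g0 h0 n; apply: sumr_ge0 => d _; apply: mulr_ge0. Qed.

Lemma dpow_ge0 g Q : dnonneg g -> dnonneg (dpow g Q).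
Proof. by move=> g0; elim: Q => [|Q IH]; [exact: dunit_ge0 | exact: dconv_ge0]. Qed.

Lemma big_dconv_ge0 (I : Type) (s : seq I) (F : I -> nat -> R) :
  (forall i, dnonneg (F i)) -> dnonneg (\big[dconv/dunit]_(i <- s) F i).
Proof.
by move=> F0; apply: big_ind => [|g h|i _]; [exact: dunit_ge0 | exact: dconv_ge0 |].
Qed.

Lemma dconv_at1 g h : dconv g h 1 = g 1%N * h 1%N.
Proof. by rewrite /dconv (_ : divisors 1 = [:: 1%N]) // big_seq1 divn1. Qed.

Lemma dpow_at1 g Q : g 1%N = 1 -> dpow g Q 1%N = 1.
Proof. by move=> g1; elim: Q => [|Q IH] //=; rewrite dconv_at1 IH g1 mulr1. Qed.

Lemma big_dconv_at1 (I : eqType) (s : seq I) (F : I -> nat -> R) :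
  {in s, forall i, F i 1%N = 1} -> (\big[dconv/dunit]_(i <- s) F i) 1%N = 1.
Proof.
move=> F1; rewrite big_seq; apply: (big_ind (fun g => g 1%N = 1)) => //.
by move=> g h g1 h1; rewrite dconv_at1 g1 h1 mulr1.
Qed.

Lemma dconv_ge_term g h N d : dnonneg g -> dnonneg h -> (0 < N)%N -> (d %| N)%N ->
  g d * h (N %/ d)%N <= dconv g h N.
Proof.
move=> g0 h0 N0 dN; rewrite /dconv (bigD1_seq d) ?divisors_uniq //=.
  by rewrite lerDl; apply: sumr_ge0 => i _; apply: mulr_ge0.
by rewrite -dvdn_divisors.
Qed.

Lemma dconv_ge_l g h N : dnonneg g -> dnonneg h -> h 1%N = 1 -> (0 < N)%N ->
  g N <= dconv g h N.
Proof.
by move=> g0 h0 h1 N0; have := dconv_ge_term g0 h0 N0 (dvdnn N); rewrite divnn N0 h1 mulr1.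
Qed.

Lemma dconv_ge_r g h N : dnonneg g -> dnonneg h -> g 1%N = 1 -> (0 < N)%N ->
  h N <= dconv g h N.
Proof.
by move=> g0 h0 g1 N0; have := dconv_ge_term g0 h0 N0 (dvd1n N); rewrite divn1 g1 mul1r.
Qed.

Lemma dconv_ge_ends g h N : dnonneg g -> dnonneg h -> (1 < N)%N ->
  g 1%N * h N + g N * h 1%N <= dconv g h N.
Proof.
move=> g0 h0 N1; have N0 : (0 < N)%N by apply: ltnW.
rewrite /dconv (bigD1_seq 1%N) ?divisor1 ?divisors_uniq //= divn1 lerD2l.
rewrite -big_filter (bigD1_seq N) /= ?filter_uniq ?divisors_uniq //.
  by rewrite divnn N0 lerDl; apply: sumr_ge0 => i _; apply: mulr_ge0.
by rewrite mem_filter divisors_id // andbT neq_ltn N1 orbT.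
Qed.

Lemma dpow_ge g Q N : dnonneg g -> g 1%N = 1 -> (1 < N)%N ->
  Q%:R * g N <= dpow g Q N.
Proof.
move=> g0 g1 N1; elim: Q => [|Q IH]; first by rewrite mul0r; exact: dunit_ge0.
apply: le_trans (dconv_ge_ends g0 (dpow_ge0 Q g0) N1).
by rewrite g1 mul1r dpow_at1 // mulr1 mulrSr mulrDl mul1r lerD.
Qed.

Lemma big_dconv_ge (I : eqType) (s : seq I) (F : I -> nat -> R) j N :
  (forall i, dnonneg (F i)) -> {in s, forall i, F i 1%N = 1} -> (0 < N)%N -> j \in s ->
  F j N <= (\big[dconv/dunit]_(i <- s) F i) N.
Proof.
move=> F0 + N0; elim: s => [|i s IH] // F1; rewrite in_cons big_cons.
have F1s : {in s, forall i, F i 1%N = 1}.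
  by move=> i' si'; apply: F1; rewrite in_cons si' orbT.
case/orP => [/eqP <-|js].
  exact: dconv_ge_l (F0 _) (big_dconv_ge0 _ F0) (big_dconv_at1 F1s) N0.
apply: le_trans (IH F1s js) _.
exact: dconv_ge_r (F0 i) (big_dconv_ge0 _ F0) (F1 i (mem_head _ _)) N0.
Qed.

Lemma deq_below_dconv L g g' h h' :
  deq_below L g g' -> deq_below L h h' -> deq_below L (dconv g h) (dconv g' h').
Proof.
move=> gg hh N /andP[N0 NL]; apply: eq_big_seq => d; rewrite -dvdn_divisors // => dN.
have d0 : (0 < d)%N := dvdn_gt0 N0 dN.
have dL : (d < L)%N := leq_ltn_trans (dvdn_leq N0 dN) NL.
have eL : (N %/ d < L)%N := leq_ltn_trans (leq_div N d) NL.
by rewrite gg ?d0 // hh // eL divn_gt0 // dvdn_leq.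
Qed.

Lemma dconv_dunit_dunit N : (0 < N)%N -> dconv (@dunit R) dunit N = dunit N.
Proof.
move=> N0; rewrite /dconv (bigD1_seq 1%N) ?divisor1 ?divisors_uniq //= divn1.
rewrite /dunit eqxx mul1r big_seq_cond big1 ?addr0 // => d /andP[_ /negbTE ->].
by rewrite mul0r.
Qed.

Lemma deq_below_dunit_dconv L g h :
  deq_below L g dunit -> deq_below L h dunit -> deq_below L (dconv g h) dunit.
Proof.
move=> gU hU N NL; rewrite (deq_below_dconv gU hU NL) dconv_dunit_dunit //.
by case/andP: NL.
Qed.

Lemma deq_below_dpow L g Q : deq_below L g dunit -> deq_below L (dpow g Q) dunit.
Proof. by move=> gU; elim: Q => [|Q IH] //; exact: deq_below_dunit_dconv. Qed.

Lemma dpartial_stable F L J J' : (J <= J')%N ->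
  (forall j, (J < j)%N -> deq_below L (F j) dunit) ->
  deq_below L (dpartial F J') (dpartial F J).
Proof.
move=> JJ' FU; rewrite /dpartial -(subnKC JJ') /index_iota !subn1 /= iotaD.
rewrite big_cat_nested; apply: (big_ind2 (deq_below L)) => //.
- rewrite big_seq; apply: (big_ind (deq_below L ^~ dunit)) => //.
    exact: deq_below_dunit_dconv.
  by move=> j; rewrite mem_iota add1n => /andP[Jj _]; apply: FU.
- by move=> g h g' h'; exact: deq_below_dconv.
Qed.

Lemma dinfprod_stable F L J : (forall j, (J < j)%N -> deq_below L (F j) dunit) ->
  deq_below L (dinfprod F) (dpartial F J).
Proof.
move=> FU N NL; rewrite /dinfprod; apply: cvg_lim => //; apply: cvg_near_cst.
by exists J => // J' /= JJ'; exact: (dpartial_stable JJ' FU).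
Qed.

End DirichletConvolution.

Section DirichletPartialSums.
Variables (R : realType) (sigma : R).
Implicit Types g h : nat -> R.

Definition dsum (M : nat) g := \sum_(1 <= n < M.+1) g n * n%:R `^ (- sigma).

Lemma series_dsum g M :
  series (fun n : nat => g n.+1 * n.+1%:R `^ (- sigma)) M = dsum M g.
Proof. by rewrite seriesEnat /dsum big_add1. Qed.

Lemma dsum_ge0 g M : dnonneg g -> 0 <= dsum M g.
Proof. by move=> g0; apply: sumr_ge0 => n _; rewrite mulr_ge0 ?powR_ge0. Qed.

Lemma big_nat_indicator (s : seq nat) x (Y : nat -> R) : uniq s ->
  \sum_(e <- s) (e == x)%:R * Y e = (x \in s)%:R * Y x.
Proof.
elim: s => [|y s IH] /=; first by rewrite big_nil mul0r.
case/andP=> ys us; rewrite big_cons IH // in_cons.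
have [<-|_] := eqVneq y x; last by rewrite mul0r add0r.
by rewrite (negbTE ys) mul0r addr0.
Qed.

Lemma big_nat_indicator_le (s : seq nat) x (Y : nat -> R) : uniq s -> 0 <= Y x ->
  \sum_(e <- s) (e == x)%:R * Y e <= Y x.
Proof.
by move=> us Y0; rewrite big_nat_indicator //; case: (x \in s); rewrite ?mul1r ?mul0r.
Qed.

Lemma big_divisors_index_iota N M (X : nat -> R) : (0 < N <= M)%N ->
  \sum_(d <- divisors N) X d = \sum_(1 <= d < M.+1 | (d %| N)%N) X d.
Proof.
case/andP=> N0 NM; rewrite -[RHS]big_filter; apply: perm_big; apply: uniq_perm.
- exact: divisors_uniq.
- by rewrite filter_uniq // iota_uniq.
move=> d; rewrite mem_filter mem_index_iota -dvdn_divisors //.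
have [dN|] := boolP ((d %| N)%N) => //=.
by rewrite (dvdn_gt0 N0 dN) ltnS (leq_trans (dvdn_leq N0 dN) NM).
Qed.

Lemma dsum_dunit_le M : dsum M dunit <= 1.
Proof.
have := big_nat_indicator_le (x := 1%N) (Y := fun n => n%:R `^ (- sigma))
  (iota_uniq 1 M) (powR_ge0 _ _).
by rewrite /dsum /index_iota subn1 powR1.
Qed.

(* Both sides are sums over pairs (d, e) in [1, M]^2, the left one only over
   those with d * e <= M. *)
Lemma dsum_dconv_le g h M : dnonneg g -> dnonneg h ->
  dsum M (dconv g h) <= dsum M g * dsum M h.
Proof.
move=> g0 h0; set r := index_iota 1 M.+1; set w := fun n : nat => n%:R `^ (- sigma).
pose T d e := g d * w d * (h e * w e).
have T0 d e : 0 <= T d e by rewrite mulr_ge0 ?mulr_ge0 ?powR_ge0.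
have dconv_w N : N \in r ->
    dconv g h N * w N = \sum_(d <- r) \sum_(e <- r) (N == d * e)%:R * T d e.
  rewrite mem_index_iota ltnS => NM; have N0 : (0 < N)%N by case/andP: NM.
  rewrite /dconv (big_divisors_index_iota _ NM) mulr_suml big_mkcond /=.
  apply: eq_big_seq => d; rewrite mem_index_iota => /andP[d0 _].
  have [dN|ndN] := boolP ((d %| N)%N); last first.
    rewrite big1 // => e _; case: eqP => [NE|]; last by rewrite mul0r.
    by move: ndN; rewrite NE dvdn_mulr.
  rewrite (eq_bigr (fun e => (e == (N %/ d)%N)%:R * T d e)); last first.
    by move=> e _; rewrite -{1}(divnK dN) mulnC eqn_pmul2l // eq_sym.
  have Nd_r : (N %/ d)%N \in r.
    rewrite mem_index_iota divn_gt0 // (dvdn_leq N0 dN) ltnS.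
    by apply: leq_trans (leq_div N d) _; case/andP: NM.
  rewrite big_nat_indicator ?iota_uniq // Nd_r mulr1n mul1r /T /w.
  have -> : N%:R = d%:R * (N %/ d)%:R :> R by rewrite -natrM mulnC divnK.
  by rewrite powRM // mulrACA.
apply: (@le_trans _ _ (\sum_(N <- r) \sum_(d <- r) \sum_(e <- r) (N == d * e)%:R * T d e)).
  by rewrite /dsum big_seq [X in _ <= X]big_seq; apply: ler_sum => N /dconv_w ->.
rewrite exchange_big /dsum big_distrl /=; apply: ler_sum => d _.
rewrite exchange_big big_distrr /=; apply: ler_sum => e _.
exact: (big_nat_indicator_le (x := (d * e)%N) (Y := fun=> T d e) (iota_uniq _ _) (T0 d e)).
Qed.

Lemma dsum_dpow_le g Q M : dnonneg g -> dsum M (dpow g Q) <= dsum M g ^+ Q.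
Proof.
move=> g0; elim: Q => [|Q IH]; first by rewrite expr0; exact: dsum_dunit_le.
rewrite exprS; apply: le_trans (dsum_dconv_le _ g0 (dpow_ge0 _ g0)) _.
by rewrite ler_wpM2l ?dsum_ge0.
Qed.

Lemma dsum_big_dconv_le (I : Type) (s : seq I) (F : I -> nat -> R) M :
  (forall i, dnonneg (F i)) ->
  dsum M (\big[dconv/dunit]_(i <- s) F i) <= \prod_(i <- s) dsum M (F i).
Proof.
move=> F0; elim: s => [|i s IH]; first by rewrite !big_nil dsum_dunit_le.
rewrite !big_cons; apply: le_trans (dsum_dconv_le _ (F0 i) (big_dconv_ge0 _ F0)) _.
by rewrite ler_wpM2l ?dsum_ge0.
Qed.

Lemma dsumD g h M : dsum M (fun n => g n + h n) = dsum M g + dsum M h.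
Proof. by rewrite -big_split; apply: eq_bigr => n _; exact: mulrDl. Qed.

Lemma dsum_xi_le b Q M :
  dsum M (xi_coef b Q) <= \sum_(p <- b) (Q ^ p.1)%:R * (Q ^ p.2)%:R `^ (- sigma).
Proof.
rewrite /dsum /xi_coef; under eq_bigr => n _ do rewrite big_mkcond mulr_suml /=.
rewrite exchange_big /=; apply: ler_sum => p _.
rewrite (eq_bigr (fun n => (n == Q ^ p.2)%N%:R * ((Q ^ p.1)%:R * n%:R `^ (- sigma)))).
  exact: big_nat_indicator_le (iota_uniq _ _) (mulr_ge0 (ler0n _ _) (powR_ge0 _ _)).
by move=> n _; rewrite eq_sym; case: eqP => _; rewrite ?mul1r ?mul0r.
Qed.

Lemma dsum_one_plus_xi_le b Q M :
  dsum M (one_plus_xi b Q) <= 1 + \sum_(p <- b) (Q ^ p.1)%:R * (Q ^ p.2)%:R `^ (- sigma).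
Proof. by rewrite /one_plus_xi dsumD lerD ?dsum_dunit_le ?dsum_xi_le. Qed.

Lemma dconverges_bounded c C : (forall n, (0 < n)%N -> 0 <= c n) ->
  (forall M, dsum M c <= C) -> dconverges c sigma.
Proof.
move=> c0 cC; apply: nondecreasing_is_cvgn.
  rewrite seriesEnat; apply: nondecreasing_series => n _ _.
  by rewrite mulr_ge0 ?powR_ge0 ?c0.
by exists C => _ [M _ <-]; rewrite series_dsum.
Qed.

End DirichletPartialSums.

Lemma finite_nat_bounded (A : set nat) :
  finite_set A -> exists B, forall j, A j -> (j < B)%N.
Proof.
move=> /finite_fsetP[X ->]; exists (\max_(i <- finmap.enum_fset X) i).+1 => j /= jX.
by rewrite ltnS; apply: (@leq_bigmax_seq _ _ xpredT id j).
Qed.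

Lemma infinite_nat_unbounded (A : set nat) : infinite_set A ->
  forall B, exists j, A j /\ (B <= j)%N.
Proof.
move=> Ainf B; apply: contrapT => noj; apply: Ainf.
apply: (@sub_finite_set _ _ `I_B) (finite_II B) => j Aj /=.
by rewrite ltnNge; apply/negP => Bj; apply: noj; exists j.
Qed.

Section SeriesFacts.
Variable R : realType.

Lemma series_bounded_geometric (t : R ^nat) K r B : 0 <= K -> 0 < r < 1 ->
  (forall j, 0 <= t j) -> (forall j, (B <= j)%N -> t j <= K * r ^+ j) ->
  exists C, forall M, series t M <= C.
Proof.
move=> K0 /andP[r0 r1] t0 tB; set U := series t B.
have rB0 : 0 < r ^+ B by rewrite exprn_gt0.
have U0 : 0 <= U by rewrite /U seriesEnat; apply: sumr_ge0.
have K'0 : 0 <= K + U / r ^+ B by rewrite addr_ge0 // divr_ge0 // ltW.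
(* [t j <= (K + U / r ^+ B) * r ^+ j] for all [j]: for [j < B] since [t j <= U]. *)
exists ((K + U / r ^+ B) / (1 - r)) => M.
have r_lt1 : `|r| < 1 by rewrite gtr0_norm.
apply: le_trans (geometric_le_lim M K'0 r0 r_lt1).
rewrite !seriesEnat /=; apply: ler_sum => j _.
have [Bj|jB] := leqP B j.
  apply: le_trans (tB _ Bj) _; apply: ler_wpM2r; first exact: exprn_ge0 (ltW r0).
  by rewrite lerDl divr_ge0 // ltW.
have tU : t j <= U.
  rewrite /U seriesEnat /= (bigD1_seq j) ?iota_uniq ?mem_index_iota //=.
  by rewrite lerDl sumr_ge0.
apply: le_trans tU _; rewrite mulrDl -[X in X <= _]add0r.
apply: lerD; first exact: mulr_ge0 K0 (exprn_ge0 _ (ltW r0)).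
rewrite mulrAC ler_pdivlMr //; apply: ler_wpM2l => //.
by apply: ler_wiXn2l; rewrite ?ltW // ltnW.
Qed.

Lemma big_series_bounded (I : eqType) (s : seq I) (t : I -> R ^nat) :
  (forall i, i \in s -> exists C, forall M, series (t i) M <= C) ->
  exists C, forall M, \sum_(i <- s) series (t i) M <= C.
Proof.
elim: s => [|i s IH] tC; first by exists 0 => M; rewrite big_nil.
have [C1 C1_ub] := tC i (mem_head _ _).
have [C2 C2_ub] : exists C, forall M, \sum_(i <- s) series (t i) M <= C.
  by apply: IH => i' si'; apply: tC; rewrite in_cons si' orbT.
by exists (C1 + C2) => M; rewrite big_cons lerD.
Qed.

Lemma not_dconverges_frequently (c : nat -> R) sigma eps : 0 < eps ->
  (forall N, exists n, (N <= n)%N /\ eps <= c n.+1 * n.+1%:R `^ (- sigma)) ->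
  ~ dconverges c sigma.
Proof.
move=> eps0 often /cvg_series_cvg_0 c_cvg0.
have [N _ near0] := cvgr_dist_lt _ _ c_cvg0 eps eps0.
have [n [Nn epsn]] := often N.
have := near0 n Nn; rewrite sub0r normrN ltNge.
by rewrite (le_trans epsn (ler_norm _)).
Qed.

Lemma abscissa_eq (c : nat -> R) rho :
  (forall sigma, rho < sigma -> dconverges c sigma) ->
  (forall sigma, sigma < rho -> ~ dconverges c sigma) ->
  abscissa c = rho%:E.
Proof.
move=> conv div; apply/eqP; rewrite eq_le; apply/andP; split.
  apply/lee_addgt0Pr => e e0; apply: ereal_inf_lbound.
  by exists (rho + e); [apply: conv; rewrite ltrDl | rewrite EFinD].
apply/ereal_infP => _ [sigma c_sigma <-]; rewrite lee_fin leNgt.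
by apply/negP => /div.
Qed.

End SeriesFacts.

Lemma approx_bounds (R : realFieldType) (x y rho : R) : 0 < y ->
  `|x / y - rho| <= 1 / y -> y * rho - 1 <= x <= y * rho + 1.
Proof.
move=> y0 approx; rewrite -ler_distl.
have -> : x - y * rho = y * (x / y - rho) by rewrite mulrBr mulrCA divff ?mulr1 // gt_eqF.
by rewrite normrM gtr0_norm // mulrC -ler_pdivlMr.
Qed.

Lemma natrX_powR (R : realType) (b n : nat) : (b ^ n)%:R = b%:R `^ n%:R :> R.
Proof. by rewrite natrX powR_mulrn. Qed.

Lemma expR_sum (R : realType) (I : Type) (s : seq I) (F : I -> R) :
  expR (\sum_(i <- s) F i) = \prod_(i <- s) expR (F i).
Proof. by apply: (big_morph expR); [exact: expRD | exact: expR0]. Qed.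

Section PrecOrder.
Variables (R : realType) (rho : R).

Lemma prec_irrefl x : ~ prec rho x x.
Proof. by case=> [lt|[_ lt]]; [rewrite ltxx in lt | rewrite ltnn in lt]. Qed.

Lemma prec_trans x y z : prec rho x y -> prec rho y z -> prec rho x z.
Proof.
case=> [xy|[Exy xy]] [yz|[Eyz yz]].
- by left; apply: lt_trans yz xy.
- by left; rewrite -Eyz.
- by left; rewrite Exy.
- by right; split; [rewrite Exy Eyz | apply: ltn_trans yz].
Qed.

Lemma prec_total x y : prec rho x y \/ x = y \/ prec rho y x.
Proof.
case: x y => m n [m' n']; rewrite /prec /=.
case: (ltgtP (m%:R - n%:R * rho) (m'%:R - n'%:R * rho)) => [lt|gt|E].
- by right; right; left.
- by left; left.
case: (ltngtP n n') => [lt|gt|En]; [by left; right | by right; right; right |].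
right; left; subst n'; congr (_, _); apply/eqP; rewrite -(eqr_nat R).
by apply/eqP; move: E; lra.
Qed.

End PrecOrder.

Section ProductSeries.
Variables (R : realType) (rho0 rho : R) (q : nat)
  (a : seq (nat * nat)) (aj : nat -> seq (nat * nat))
  (m0 n0 : nat) (k : nat -> nat).
Hypotheses (rho0_lt_rho : rho0 < rho) (q_ge2 : (2 <= q)%N) (a_uniq : uniq a)
  (a_n_gt0 : forall p, p \in a -> (0 < p.2)%N)
  (aj_uniq : forall j, (0 < j)%N -> uniq (aj j))
  (aj_sub : forall j, (0 < j)%N -> {subset aj j <= a})
  (a_slope : forall p, p \in a -> p.1%:R / p.2%:R <= rho0)
  (m0n0_a : (m0, n0) \in a)
  (m0n0_often : infinite_set [set j : nat | (0 < j)%N /\ (m0, n0) \in aj j])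
  (m0n0_min : forall p, p \in a ->
     infinite_set [set j : nat | (0 < j)%N /\ p \in aj j] ->
     ~ prec rho p (m0, n0))
  (k_approx : forall j, (0 < j)%N -> `| (k j)%:R / j%:R - rho | <= 1 / j%:R).

Definition f (j : nat) : nat :=
  if (rho - rho0)^-1 <= j%:R then (n0 * k j - m0 * j)%N else 0%N.

Definition factor j : nat -> R := one_plus_xi (aj j) (q ^ j).

Definition pfactor j : nat -> R := dpow (factor j) (q ^ f j).

Definition coef : nat -> R := dinfprod pfactor.

Lemma q_gt0 : (0 < q)%N. Proof. exact: leq_trans q_ge2. Qed.

Lemma qR_gt1 : 1 < q%:R :> R. Proof. by rewrite ltr1n. Qed.

Lemma qR_gt0 : 0 < q%:R :> R. Proof. exact: lt_trans ltr01 qR_gt1. Qed.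

Lemma qR_neq0 : q%:R != 0 :> R. Proof. exact: lt0r_neq0 qR_gt0. Qed.

Lemma factor_ge0 j : dnonneg (factor j).
Proof. by move=> n; rewrite addr_ge0 ?dunit_ge0 ?sumr_ge0. Qed.

Lemma pfactor_ge0 j : dnonneg (pfactor j).
Proof. exact: dpow_ge0 (factor_ge0 j). Qed.

Lemma qpow_gt1 j : (0 < j)%N -> (1 < q ^ j)%N.
Proof. by move=> j0; rewrite -(exp1n j) ltn_exp2r. Qed.

Lemma ltn_qpow_expn j n : (0 < n)%N -> (j < (q ^ j) ^ n)%N.
Proof.
move=> n_gt0; apply: leq_trans (ltn_expl j q_ge2) _.
by rewrite -{1}(expn1 (q ^ j)) leq_pexp2l ?expn_gt0 ?q_gt0.
Qed.

Lemma factor_trivial j : (0 < j)%N -> deq_below (q ^ j) (factor j) dunit.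
Proof.
move=> j0 N /andP[_ Nq]; rewrite /factor /one_plus_xi /xi_coef big_seq_cond big1 ?addr0 //.
move=> p /andP[/(aj_sub j0)/a_n_gt0 p0 /eqP qpN]; move: Nq.
by rewrite -qpN -{2}(expn1 (q ^ j)) ltn_exp2l ?qpow_gt1 // ltnNge p0.
Qed.

Lemma pfactor_trivial j : (0 < j)%N -> deq_below (q ^ j) (pfactor j) dunit.
Proof. by move=> j0; apply: deq_below_dpow; exact: factor_trivial. Qed.

Lemma factor_at1 j : (0 < j)%N -> factor j 1%N = 1.
Proof. by move=> j0; rewrite (factor_trivial j0) // qpow_gt1. Qed.

Lemma pfactor_at1 j : (0 < j)%N -> pfactor j 1%N = 1.
Proof. by move=> j0; apply: dpow_at1; exact: factor_at1. Qed.

Lemma coef_dpartial J N : (0 < N <= J)%N -> coef N = dpartial pfactor J N.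
Proof.
move=> /andP[N0 NJ]; apply: (dinfprod_stable (L := J.+1)); last by rewrite N0 ltnS.
move=> j Jj e /andP[e0 eJ]; apply: pfactor_trivial; first exact: leq_ltn_trans Jj.
by rewrite e0 (leq_ltn_trans _ (ltn_trans Jj (ltn_expl j q_ge2))) // -ltnS.
Qed.

Lemma coef_ge0 N : (0 < N)%N -> 0 <= coef N.
Proof.
move=> N0; rewrite (@coef_dpartial N) ?N0 ?leqnn //; exact: (big_dconv_ge0 _ pfactor_ge0 N).
Qed.

Lemma coef_ge j : (0 < j)%N -> (m0, n0) \in aj j ->
  (q ^ f j)%:R * ((q ^ j) ^ m0)%:R <= coef ((q ^ j) ^ n0).
Proof.
move=> j0 m0n0_j; set N := ((q ^ j) ^ n0)%N; have n0_gt0 := a_n_gt0 m0n0_a.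
have N1 : (1 < N)%N by rewrite /N -(exp1n n0) ltn_exp2r ?qpow_gt1.
have jN : (j <= N)%N by rewrite ltnW // ltn_qpow_expn.
rewrite (@coef_dpartial N) ?(ltnW N1) ?leqnn //.
apply: le_trans (big_dconv_ge (j := j) pfactor_ge0 _ (ltnW N1) _); last first.
- by rewrite mem_index_iota j0 ltnS.
- by move=> i; rewrite mem_index_iota => /andP[i0 _]; exact: pfactor_at1.
apply: le_trans (dpow_ge (q ^ f j) (factor_ge0 j) (factor_at1 j0) N1).
rewrite ler_wpM2l // /factor /one_plus_xi /xi_coef ler_wpDl ?dunit_ge0 //.
by rewrite (big_rem _ m0n0_j) /= eqxx lerDl sumr_ge0.
Qed.

Lemma k_bounds j : (0 < j)%N -> j%:R * rho - 1 <= (k j)%:R <= j%:R * rho + 1.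
Proof.
by move=> j0; apply: approx_bounds; last exact: k_approx _ j0; rewrite ltr0n.
Qed.

Lemma a_fst_le p : p \in a -> p.1%:R <= rho0 * p.2%:R :> R.
Proof. by move=> pa; rewrite -ler_pdivrMr ?a_slope // ltr0n a_n_gt0. Qed.

Lemma f_eq j : (0 < j)%N -> (rho - rho0)^-1 <= j%:R ->
  (f j)%:R = n0%:R * (k j)%:R - m0%:R * j%:R :> R.
Proof.
move=> j0 jT; rewrite /f jT.
have d0 : 0 < rho - rho0 by rewrite subr_gt0.
have jd : 1 <= j%:R * (rho - rho0) by rewrite mulrC -ler_pdivrMl // mulr1.
have /andP[kl _] := k_bounds j0; have m0n0 := a_fst_le m0n0_a.
(* the subtraction in [f j] does not truncate:
   [n0 * k j >= n0 * (j * rho - 1) >= j * rho0 * n0 >= j * m0] *)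
have : (m0 * j <= n0 * k j)%N.
  rewrite -(ler_nat R) !natrM.
  have : 0 <= n0%:R * ((k j)%:R - (j%:R * rho - 1)) :> R by rewrite mulr_ge0 ?subr_ge0.
  have : 0 <= n0%:R * (j%:R * (rho - rho0) - 1) :> R by rewrite mulr_ge0 ?subr_ge0.
  have : 0 <= j%:R * (rho0 * n0%:R - m0%:R) :> R by rewrite mulr_ge0 ?subr_ge0.
  nra.
by move=> le; rewrite natrB // !natrM.
Qed.

Lemma xi_term_exponent_le j p sigma : (0 < j)%N -> p \in a -> rho < sigma ->
  p.1%:R - p.2%:R * rho <= m0%:R - n0%:R * rho ->
  (f j)%:R + (j * p.1)%:R - (j * p.2)%:R * sigma <= n0%:R - j%:R * (sigma - rho) :> R.
Proof.
move=> j0 pa rs p_le; rewrite !natrM.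
have p2 : 1 <= p.2%:R :> R by rewrite ler1n a_n_gt0.
have p1 := a_fst_le pa.
have : 0 <= j%:R * ((p.2%:R - 1) * (sigma - rho)) :> R.
  by rewrite mulr_ge0 ?mulr_ge0 ?subr_ge0 // ltW.
have [jT|jT] := boolP ((rho - rho0)^-1 <= j%:R).
  rewrite f_eq //; have /andP[_ ku] := k_bounds j0.
  have : 0 <= n0%:R * (j%:R * rho + 1 - (k j)%:R) :> R by rewrite mulr_ge0 ?subr_ge0.
  have : 0 <= j%:R * ((m0%:R - n0%:R * rho) - (p.1%:R - p.2%:R * rho)) :> R.
    by rewrite mulr_ge0 ?subr_ge0.
  nra.
rewrite /f (negbTE jT).
have : 0 <= j%:R * (rho0 * p.2%:R - p.1%:R) :> R by rewrite mulr_ge0 ?subr_ge0.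
have : 0 <= j%:R * p.2%:R * (rho - rho0) :> R by rewrite !mulr_ge0 ?subr_ge0 // ltW.
have : 0 <= n0%:R :> R by [].
nra.
Qed.

Lemma xi_term_exponent_ge j sigma :
  (0 < j)%N -> (rho - rho0)^-1 <= j%:R -> sigma < rho ->
  - n0%:R <= (f j)%:R + (j * m0)%:R - (j * n0)%:R * sigma :> R.
Proof.
move=> j0 jT sr; rewrite f_eq // !natrM; have /andP[kl _] := k_bounds j0.
have : 0 <= n0%:R * ((k j)%:R - (j%:R * rho - 1)) :> R by rewrite mulr_ge0 ?subr_ge0.
have : 0 <= j%:R * n0%:R * (rho - sigma) :> R by rewrite !mulr_ge0 ?subr_ge0 // ltW.
nra.
Qed.

Definition xi_term sigma (p : nat * nat) j : R :=
  (q ^ f j)%:R * (((q ^ j) ^ p.1)%:R * ((q ^ j) ^ p.2)%:R `^ (- sigma)).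

Lemma xi_term_ge0 sigma p j : 0 <= xi_term sigma p j.
Proof. by rewrite mulr_ge0 ?mulr_ge0 ?powR_ge0. Qed.

Lemma xi_termE sigma p j :
  xi_term sigma p j = q%:R `^ ((f j)%:R + (j * p.1)%:R - (j * p.2)%:R * sigma).
Proof.
rewrite /xi_term -!expnM !natrX_powR -powRrM -!powRD ?qR_neq0 ?implybT //.
by rewrite mulrN addrA.
Qed.

Lemma xi_term_series_bounded p sigma : p \in a -> rho < sigma ->
  exists C, forall M, series (fun j => if p \in aj j then xi_term sigma p j else 0) M <= C.
Proof.
move=> pa rs; set t := (fun j : nat => if p \in aj j then _ else _).
have t0 j : 0 <= t j by rewrite /t; case: ifP => _; rewrite ?xi_term_ge0.
have [p_often|p_rare] := pselect (infinite_set [set j | (0 < j)%N /\ p \in aj j]).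
  have p_le : p.1%:R - p.2%:R * rho <= m0%:R - n0%:R * rho.
    by rewrite leNgt; apply/negP => lt; apply: (m0n0_min pa p_often); left.
  set d := sigma - rho; have d0 : 0 < d by rewrite subr_gt0.
  set r := q%:R `^ (- d); have r0 : 0 < r := powR_gt0 _ qR_gt0.
  have r1 : r < 1.
    rewrite lt_neqAle powR_eq1 !negb_or gt_eqF ?qR_gt1 //= -leNgt (ltW qR_gt0) /=.
    rewrite oppr_eq0 gt_eqF //=.
    by rewrite -(powRr0 q%:R) ler_powR ?(ltW qR_gt1) // lerNl oppr0 ltW.
  apply: (series_bounded_geometric (K := q%:R `^ n0%:R) (r := r) (B := 1)) => //.
    by rewrite r0 r1.
  move=> j j0; rewrite /t; case: ifP => pj; last first.
    by rewrite mulr_ge0 ?powR_ge0 ?exprn_ge0 ?ltW.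
  rewrite xi_termE /r -powR_mulrn ?(ltW r0) // -powRrM -powRD ?qR_neq0 ?implybT //.
  rewrite ler_powR ?(ltW qR_gt1) //.
  by have := xi_term_exponent_le j0 pa rs p_le; rewrite -/d; lra.
have [B B_ub] := finite_nat_bounded (contrapT p_rare).
apply: (series_bounded_geometric (K := 0) (r := 2^-1) (B := B.+1)) => //.
  by apply/andP; split; lra.
move=> j Bj; rewrite mul0r /t; case: ifP => // pj.
have /B_ub : (0 < j)%N /\ p \in aj j by split; [exact: leq_trans Bj | exact: pj].
by rewrite ltnNge (ltnW Bj).
Qed.

Definition xi_val sigma j : R :=
  \sum_(p <- aj j) ((q ^ j) ^ p.1)%:R * ((q ^ j) ^ p.2)%:R `^ (- sigma).

Lemma xi_valE sigma j : (0 < j)%N -> (q ^ f j)%:R * xi_val sigma j =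
  \sum_(p <- a) (if p \in aj j then xi_term sigma p j else 0).
Proof.
move=> j0; rewrite /xi_val mulr_sumr -big_mkcond -big_filter /=.
apply: perm_big; apply: uniq_perm; rewrite ?filter_uniq ?aj_uniq // => p.
by rewrite mem_filter; case pj: (p \in aj j); rewrite ?(aj_sub j0 pj).
Qed.

Lemma xi_val_bounded sigma : rho < sigma ->
  exists C, forall M, \sum_(1 <= j < M.+1) (q ^ f j)%:R * xi_val sigma j <= C.
Proof.
move=> rs; pose t p j := if p \in aj j then xi_term sigma p j else 0.
have t0 p j : 0 <= t p j by rewrite /t; case: ifP => _; rewrite ?xi_term_ge0.
have [C C_ub] := big_series_bounded (fun p pa => xi_term_series_bounded pa rs).
exists C => M; apply: le_trans (C_ub M.+1).
rewrite /series /= exchange_big [leRHS]big_ltn //=; apply: ler_wpDl.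
  by apply: sumr_ge0 => p _; exact: t0.
by apply: ler_sum_nat => j /andP[j0 _]; rewrite xi_valE.
Qed.

Lemma dsum_coef_le sigma M :
  dsum sigma M coef <= expR (\sum_(1 <= j < M.+1) (q ^ f j)%:R * xi_val sigma j).
Proof.
have -> : dsum sigma M coef = dsum sigma M (dpartial pfactor M).
  by apply: eq_big_seq => n; rewrite mem_index_iota ltnS => nM; rewrite (coef_dpartial nM).
apply: le_trans (dsum_big_dconv_le _ _ _ pfactor_ge0) _.
rewrite expR_sum; apply: ler_prod => j _; rewrite dsum_ge0 /=; last exact: pfactor_ge0.
have fj_ge0 := factor_ge0 j.
rewrite /pfactor; apply: le_trans (dsum_dpow_le sigma (q ^ f j) M fj_ge0) _.
rewrite expRM_natl lerXn2r ?nnegrE ?dsum_ge0 ?expR_ge0 //.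
exact: le_trans (dsum_one_plus_xi_le sigma (aj j) (q ^ j) M) (expR_ge1Dx _).
Qed.

Lemma coef_converges sigma : rho < sigma -> dconverges coef sigma.
Proof.
move=> rs; have [C C_ub] := xi_val_bounded rs.
apply: (dconverges_bounded (C := expR C)) => [n|M]; first exact: coef_ge0.
by apply: le_trans (dsum_coef_le sigma M) _; rewrite ler_expR.
Qed.

Lemma coef_diverges sigma : sigma < rho -> ~ dconverges coef sigma.
Proof.
move=> sr; apply: (not_dconverges_frequently (eps := q%:R `^ (- n0%:R))).
  exact: powR_gt0 qR_gt0.
move=> N; set T := (rho - rho0)^-1; have T0 : 0 <= T by rewrite invr_ge0 subr_ge0 ltW.
have [j [[j0 m0n0_j] jB]] :=
  infinite_nat_unbounded m0n0_often (maxn N.+1 (Num.Def.archi_bound T)).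
have jT : T <= j%:R.
  apply/ltW/(lt_le_trans (archi_boundP T0)).
  by rewrite ler_nat (leq_trans (leq_maxr _ _) jB).
have n0_gt0 := a_n_gt0 m0n0_a.
have Sn : ((q ^ j) ^ n0).-1.+1 = ((q ^ j) ^ n0)%N.
  by rewrite prednK // (leq_ltn_trans _ (ltn_qpow_expn j n0_gt0)).
exists ((q ^ j) ^ n0).-1; split.
  have Nj : (N < j)%N := leq_trans (leq_maxl _ _) jB.
  by rewrite -ltnS Sn (ltn_trans Nj (ltn_qpow_expn j n0_gt0)).
rewrite Sn; apply: (@le_trans _ _ (xi_term sigma (m0, n0) j)).
  rewrite xi_termE; apply: ler_powR; first exact: ltW qR_gt1.
  exact: xi_term_exponent_ge j0 jT sr.
by rewrite /xi_term mulrA ler_wpM2r ?powR_ge0 ?coef_ge.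
Qed.

Lemma abscissa_coef : abscissa coef = rho%:E.
Proof. exact: abscissa_eq coef_converges coef_diverges. Qed.

End ProductSeries.

Unset Implicit Arguments.

Theorem lemma5p2 (R : realType) (rho0 rho : R) (q : nat)
  (a : seq (nat * nat)) (aj : nat -> seq (nat * nat))
  (m0 n0 : nat) (k : nat -> nat) :
  0 < rho0 -> rho0 < rho -> (2 <= q)%N ->
  uniq a ->
  (forall p, p \in a -> (0 < p.2)%N) ->
  (forall j, (0 < j)%N -> uniq (aj j) /\ aj j != [::] /\ {subset aj j <= a}) ->
  (forall p, p \in a -> p.1%:R / p.2%:R <= rho0) ->
  (m0, n0) \in a ->
  infinite_set [set j : nat | (0 < j)%N /\ (m0, n0) \in aj j] ->
  (forall p, p \in a ->
     infinite_set [set j : nat | (0 < j)%N /\ p \in aj j] ->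
     ~ prec rho p (m0, n0)) ->
  (forall j, (0 < j)%N -> (0 < k j)%N /\
     `| (k j)%:R / j%:R - rho | <= 1 / j%:R) ->
  let f := fun j : nat =>
    if (rho - rho0)^-1 <= j%:R then (n0 * k j - m0 * j)%N else 0%N in
  ((forall x, x \in a -> ~ prec rho x x) /\
   (forall x y z, x \in a -> y \in a -> z \in a ->
      prec rho x y -> prec rho y z -> prec rho x z) /\
   (forall x y, x \in a -> y \in a ->
      prec rho x y \/ x = y \/ prec rho y x))
  /\
  abscissa (dinfprod (fun j => dpow (one_plus_xi (aj j) (q ^ j)) (q ^ f j)))
    = rho%:E.
Proof.
move=> _ rho0_lt_rho q_ge2 a_uniq a_n_gt0 aj_wf a_slope m0n0_a m0n0_often m0n0_min
  k_wf f.
split.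
  split; first by move=> x _; exact: prec_irrefl.
  split; first by move=> x y z _ _ _; exact: prec_trans.
  by move=> x y _ _; exact: prec_total.
apply: (abscissa_coef rho0_lt_rho q_ge2 a_uniq a_n_gt0 _ _ a_slope m0n0_a
  m0n0_often m0n0_min) => j j0.
- by have [] := aj_wf j j0.
- by have [_ []] := aj_wf j j0.
- by have [] := k_wf j j0.
Qed.
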